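(* Let $x_1,x_2,\dots,y_1,y_2,\dots$ be indeterminates and $$F(q)=\sum_{d\ge0}\ \sum_{0=d_0<d_1<\dots<d_r=d}\frac{\prod_{i=1}^r\left(y_{d_i-d_{i-1}}+x_{d_i-d_{i-1}}d_{i-1}\right)}{r!}q^d\in\mathbb Q[x_k,y_k]_{k\ge1}[[q]]$$ (the $d=0$ term being $1$, from $r=0$). Then every coefficient of $q^d$ in $\log F(q)$ is a polynomial of degree at most one in the variables $y_1,y_2,\dots$. *)

From HB Require Import structures.
From mathcomp Require Import all_boot all_order all_algebra.
From mathcomp Require Import mpoly.
Set Implicit Arguments. Unset Strict Implicit. Unset Printing Implicit Defensive.
Import Order.TTheory GRing.Theory Num.Theory.
Local Open Scope ring_scope.

(* Truncated coefficient ring: Q[x_1..x_{n+1}, y_1..y_{n+1}].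
   Variables 0..n of the first block are x_1..x_{n+1},
   variables 0..n of the second block are y_1..y_{n+1}. *)
Definition Rn (n : nat) := {mpoly rat[n.+1 + n.+1]}.

Definition xv (n k : nat) : Rn n := 'X_(lshift n.+1 (inord k.-1 : 'I_n.+1)).
Definition yv (n k : nat) : Rn n := 'X_(rshift n.+1 (inord k.-1 : 'I_n.+1)).

(* Coefficient of q^d in F(q): sum over r and over compositions
   (a_1,...,a_r) of d into positive parts (a_i = d_i - d_{i-1}),
   of prod_i (y_{a_i} + x_{a_i} d_{i-1}) / r!, with d_{i-1} = sum_{j<i} a_j. *)
Definition Fcoef (n d : nat) : Rn n :=
  \sum_(r < d.+1)
    \sum_(a : {ffun 'I_r -> 'I_d.+1} |
            [forall i, (0 < (a i : nat))%N] && ((\sum_(i < r) (a i : nat))%N == d))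
      ((r`!)%:R^-1 : rat) *:
        \prod_(i < r)
          (yv n (a i) + xv n (a i) * ((\sum_(j < r | (j < i)%N) (a j : nat))%N)%:R).

Definition Ftrunc (n N : nat) : {poly Rn n} := \poly_(i < N.+1) Fcoef n i.

(* Coefficient of q^d in log F(q) = sum_{m>=1} (-1)^(m+1) (F-1)^m / m.
   Since F - 1 has zero constant term, only m <= d contribute to q^d,
   and only coefficients of F of degree <= d matter. *)
Definition logFcoef (n d : nat) : Rn n :=
  \sum_(1 <= m < d.+1)
    (((-1) ^+ m.+1 / m%:R : rat) *: ((Ftrunc n d - 1) ^+ m)`_d).

Definition ydeg_le1 (n : nat) (p : Rn n) : Prop :=
  forall m, m \in msupp p -> (\sum_(i < n.+1) m (rshift n.+1 i) <= 1)%N.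

From HB Require Import structures.
From mathcomp Require Import all_boot all_order all_algebra.
From mathcomp Require Import mpoly zify ring.
Set Implicit Arguments. Unset Strict Implicit. Unset Printing Implicit Defensive.
Import Order.TTheory GRing.Theory Num.Theory.
Local Open Scope ring_scope.

(* Introduce a second variable t and the bivariate series
     F(q,t) = sum_(d,r) t^r / r! * sum_(0 = d_0 < ... < d_r = d)
                prod_i (y_(d_i - d_(i-1)) + x_(d_i - d_(i-1)) d_(i-1)) q^d,
   so that F(q) = F(q,1). Splitting off the last part of each composition gives
   d_t F = (Y + X q d_q) F with Y = sum_a y_a q^a and X = sum_a x_a q^a. Since
   d_t and q d_q are derivations, G = log F solves the linear equation
   d_t G = Y + X q d_q G, with G(q,0) = 0. Hence the coefficient of q^d t^(r+1)
   of G is, up to the factor 1/(r+1), y_d (for r = 0 only) plus x-multiples of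
   coefficients of t^r, and by induction on r every coefficient of G, hence of
   log F(q) = G(q,1), has degree at most one in the y's. All series are taken
   modulo q^(N+1), which determines the coefficient of q^N. *)

Section BlockDegree.
Variables (R : nzRingType) (k l : nat).
Implicit Types (m : 'X_{1..k + l}) (p q : {mpoly R[k + l]}).

Definition ydeg m := (\sum_(i < l) m (rshift k i))%N.

Definition ydeg_le e p := forall m, m \in msupp p -> (ydeg m <= e)%N.

Lemma ydegD m1 m2 : ydeg (m1 + m2)%MM = (ydeg m1 + ydeg m2)%N.
Proof. by rewrite /ydeg -big_split; apply: eq_bigr => i _; rewrite mnmDE. Qed.

Lemma ydeg_le0 e : ydeg_le e 0.
Proof. by move=> m; rewrite msupp0. Qed.

Lemma ydeg_leD e p q : ydeg_le e p -> ydeg_le e q -> ydeg_le e (p + q).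
Proof. by move=> hp hq m /msuppD_le; rewrite mem_cat => /orP[/hp|/hq]. Qed.

Lemma ydeg_le_sum e I (r : seq I) (P : pred I) (F : I -> {mpoly R[k + l]}) :
  (forall i, P i -> ydeg_le e (F i)) -> ydeg_le e (\sum_(i <- r | P i) F i).
Proof.
move=> hF; elim/big_rec: _ => [|i p Pi hp]; first exact: ydeg_le0.
exact: ydeg_leD (hF _ Pi) hp.
Qed.

Lemma ydeg_leZ e c p : ydeg_le e p -> ydeg_le e (c *: p).
Proof. by move=> hp m /msuppZ_le /hp. Qed.

Lemma ydeg_leMn e p j : ydeg_le e p -> ydeg_le e (p *+ j).
Proof.
move=> hp; elim: j => [|j ih]; first by rewrite mulr0n; apply: ydeg_le0.
by rewrite mulrS; apply: ydeg_leD.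
Qed.

Lemma ydeg_leM e1 e2 p q :
  ydeg_le e1 p -> ydeg_le e2 q -> ydeg_le (e1 + e2) (p * q).
Proof.
move=> hp hq m /msuppM_le /allpairsP [[m1 m2] /= [h1 h2 ->]].
by rewrite ydegD leq_add ?hp ?hq.
Qed.

Lemma ydeg_le_Xl (i : 'I_k) : ydeg_le 0 ('X_(lshift l i) : {mpoly R[k + l]}).
Proof.
move=> m; rewrite msuppX mem_seq1 => /eqP ->.
by rewrite /ydeg big1 // => j _; rewrite mnm1E eq_lrshift.
Qed.

Lemma ydeg_le_Xr (i : 'I_l) : ydeg_le 1 ('X_(rshift k i) : {mpoly R[k + l]}).
Proof.
move=> m; rewrite msuppX mem_seq1 => /eqP ->.
rewrite /ydeg (bigD1 i) //= mnm1E eqxx big1 // => j ne_ji.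
by rewrite mnm1E eq_rshift eq_sym (negbTE ne_ji).
Qed.

End BlockDegree.

Section Compositions.
Variables (A : comNzRingType) (f : nat -> nat -> A).

Definition is_comp r K (a : {ffun 'I_r -> 'I_K}) d :=
  [forall i, (0 < a i)%N] && ((\sum_(i < r) (a i : nat))%N == d).

Definition comp_weight r K (a : {ffun 'I_r -> 'I_K}) :=
  \prod_(i < r) f (a i) (\sum_(j < r | (j < i)%N) (a j : nat))%N.

(* Parts are stored in ['I_K]; the bound is irrelevant once [d < K]
   ([comp_sum_boundedE]), but the recursion on [r] needs it fixed while [d] varies. *)
Definition comp_sum_bounded K r d :=
  \sum_(a : {ffun 'I_r -> 'I_K} | is_comp a d) comp_weight a.

Definition comp_sum r d := comp_sum_bounded d.+1 r d.

Lemma eq_is_comp r K K' (a : {ffun 'I_r -> 'I_K}) (b : {ffun 'I_r -> 'I_K'}) d :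
  (forall i, a i = b i :> nat) -> is_comp a d = is_comp b d.
Proof.
move=> eq_ab; rewrite /is_comp; congr andb.
  by apply: eq_forallb => i; rewrite eq_ab.
by congr eq_op; apply: eq_bigr => i _; rewrite eq_ab.
Qed.

Lemma eq_comp_weight r K K' (a : {ffun 'I_r -> 'I_K}) (b : {ffun 'I_r -> 'I_K'}) :
  (forall i, a i = b i :> nat) -> comp_weight a = comp_weight b.
Proof.
move=> eq_ab; rewrite /comp_weight; apply: eq_bigr => i _; rewrite eq_ab.
by congr f; apply: eq_bigr => j _; rewrite eq_ab.
Qed.

Lemma is_comp_part_le r K (a : {ffun 'I_r -> 'I_K}) d i : is_comp a d -> (a i <= d)%N.
Proof. by case/andP=> _ /eqP <-; rewrite (bigD1 i) //= leq_addr. Qed.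

Lemma comp_sum_boundedE K r d : (d < K)%N -> comp_sum_bounded K r d = comp_sum r d.
Proof.
move=> ltdK; rewrite /comp_sum /comp_sum_bounded.
pose widen (a : {ffun 'I_r -> 'I_d.+1}) := [ffun i => widen_ord ltdK (a i)].
pose narrow (b : {ffun 'I_r -> 'I_K}) : {ffun 'I_r -> 'I_d.+1} := [ffun i => inord (b i)].
have widenE a i : widen a i = a i :> nat by rewrite ffunE.
rewrite (reindex_onto widen narrow) /=; last first.
  move=> b b_comp; apply/ffunP => i; rewrite !ffunE; apply: val_inj => /=.
  by rewrite inordK // ltnS (is_comp_part_le i b_comp).
apply: eq_big => [a|a _]; last exact: eq_comp_weight.
rewrite (eq_is_comp _ (widenE a)) andb_idr // => _.
by apply/eqP/ffunP => i; rewrite !ffunE; apply: val_inj; rewrite /= inordK.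
Qed.

Definition ffun_rcons r K (p : 'I_K * {ffun 'I_r -> 'I_K}) : {ffun 'I_r.+1 -> 'I_K} :=
  [ffun i => if unlift ord_max i is Some j then p.2 j else p.1].

Lemma ffun_rcons_last r K p : @ffun_rcons r K p ord_max = p.1.
Proof. by rewrite ffunE unlift_none. Qed.

Lemma ffun_rcons_widen r K p (i : 'I_r) :
  @ffun_rcons r K p (widen_ord (leqnSn r) i) = p.2 i.
Proof.
have -> : widen_ord (leqnSn r) i = lift ord_max i.
  by apply: val_inj; rewrite /= /bump leqNgt ltn_ord.
by rewrite ffunE liftK.
Qed.

Lemma ffun_rcons_bij r K : bijective (@ffun_rcons r K).
Proof.
exists (fun a : {ffun 'I_r.+1 -> 'I_K} =>
  (a ord_max, [ffun i : 'I_r => a (lift ord_max i)]) : 'I_K * {ffun 'I_r -> 'I_K}).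
  case=> t b /=; rewrite ffun_rcons_last; congr pair.
  by apply/ffunP => i; rewrite !ffunE liftK.
move=> a; apply/ffunP => i; rewrite ffunE /=.
by case: unliftP => [j ->|->]; rewrite ?ffunE.
Qed.

Lemma ffun_rcons_prefix r K p (i0 : nat) : (i0 <= r)%N ->
  (\sum_(j < r.+1 | (j < i0)%N) (@ffun_rcons r K p j : nat))%N =
  (\sum_(j < r | (j < i0)%N) (p.2 j : nat))%N.
Proof.
move=> le_i0r; rewrite big_mkcond big_ord_recr /= ltnNge le_i0r addn0.
by rewrite [RHS]big_mkcond; apply: eq_bigr => j _; rewrite ffun_rcons_widen.
Qed.

Lemma ffun_rcons_sum r K p :
  (\sum_(i < r.+1) (@ffun_rcons r K p i : nat))%N =
  ((\sum_(i < r) (p.2 i : nat)) + p.1)%N.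
Proof.
rewrite big_ord_recr /= ffun_rcons_last; congr addn.
by apply: eq_bigr => i _; rewrite ffun_rcons_widen.
Qed.

Lemma is_comp_rcons r K t (b : {ffun 'I_r -> 'I_K}) d :
  is_comp (ffun_rcons (t, b)) d = [&& 0 < t, t <= d & is_comp b (d - t)]%N.
Proof.
rewrite /is_comp ffun_rcons_sum /=.
have -> : [forall i, 0 < ffun_rcons (t, b) i]%N = (0 < t)%N && [forall i, 0 < b i]%N.
  apply/forallP/andP => [pos|[t_gt0 /forallP b_pos] i].
    split; first by have := pos ord_max; rewrite ffun_rcons_last.
    by apply/forallP => i; have := pos (widen_ord (leqnSn r) i); rewrite ffun_rcons_widen.
  by case: (unliftP ord_max i) => [j ->|->]; rewrite ffunE ?liftK ?unlift_none.
case: (0 < t)%N; case: [forall i, 0 < b i]%N; rewrite ?andbF //=.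
by apply/eqP/andP => [<-|[le_td /eqP ->]]; [rewrite leq_addl addnK | rewrite subnK].
Qed.

Lemma comp_weight_rcons r K t (b : {ffun 'I_r -> 'I_K}) d :
  is_comp (ffun_rcons (t, b)) d ->
  comp_weight (ffun_rcons (t, b)) = f t (d - t)%N * comp_weight b.
Proof.
case/andP=> _ /eqP; rewrite ffun_rcons_sum /= => sum_d.
rewrite /comp_weight big_ord_recr /= ffun_rcons_last mulrC; congr (_ * _).
  congr f; rewrite (ffun_rcons_prefix _ (leqnn r)) -sum_d addnK.
  by apply: eq_bigl => j; rewrite ltn_ord.
apply: eq_bigr => i _; rewrite ffun_rcons_widen ffun_rcons_prefix //; exact: ltnW.
Qed.

Lemma comp_sum_bounded_rcons K r d : comp_sum_bounded K r.+1 d =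
  \sum_(t < K | (0 < t <= d)%N) f t (d - t)%N * comp_sum_bounded K r (d - t)%N.
Proof.
rewrite /comp_sum_bounded (reindex (@ffun_rcons r K)); last first.
  exact/onW_bij/ffun_rcons_bij.
under [RHS]eq_bigr do rewrite mulr_sumr.
rewrite pair_big_dep; apply: eq_big => [[t b]|[t b] comp_tb] /=.
  by rewrite is_comp_rcons andbA.
exact: comp_weight_rcons.
Qed.

Lemma comp_sumS r d :
  comp_sum r.+1 d = \sum_(t < d.+1 | (0 < t)%N) f t (d - t)%N * comp_sum r (d - t)%N.
Proof.
rewrite {1}/comp_sum comp_sum_bounded_rcons; apply: eq_big => [t|t _].
  by have := ltn_ord t; rewrite ltnS => ->; rewrite andbT.
by rewrite comp_sum_boundedE // ltnS leq_subr.
Qed.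

Lemma comp_sum0 d : comp_sum 0 d = (d == 0)%:R.
Proof.
rewrite /comp_sum /comp_sum_bounded (eq_bigl (fun _ => d == 0)); last first.
  by move=> a; rewrite /is_comp big_ord0 eq_sym; apply/andb_idl => _; apply/forallP => [[]].
case: (d == 0); last by rewrite big_pred0.
rewrite (eq_bigr (fun _ => 1)); last by move=> a _; rewrite /comp_weight big_ord0.
by rewrite sumr_const card_ffun !card_ord.
Qed.

Lemma comp_sum_gt r d : (d < r)%N -> comp_sum r d = 0.
Proof.
move=> ltdr; rewrite /comp_sum /comp_sum_bounded big_pred0 // => a.
apply/negP => /andP [/forallP pos /eqP sum_d].
have : (\sum_(i < r) 1 <= \sum_(i < r) (a i : nat))%N by apply: leq_sum => i _; exact: pos.
by rewrite sum1_card card_ord sum_d leqNgt ltdr.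
Qed.

End Compositions.

Lemma sum_exprN_mul1D (R : comNzRingType) k (u : R) :
  (\sum_(i < k) (- u) ^+ i) * (1 + u) = 1 - (- u) ^+ k.
Proof. by rewrite -opprB subrX1 -mulNr opprB opprK mulrC. Qed.

Section VanishBelow.
Variable B : comNzRingType.
Implicit Types p q s u : {poly B}.

Definition vanish_below k p := forall i, (i < k)%N -> p`_i = 0.

Lemma vanish_belowD k p q :
  vanish_below k p -> vanish_below k q -> vanish_below k (p + q).
Proof. by move=> hp hq i lt_ik; rewrite coefD hp ?hq ?addr0. Qed.

Lemma vanish_belowN k p : vanish_below k p -> vanish_below k (- p).
Proof. by move=> hp i lt_ik; rewrite coefN hp ?oppr0. Qed.

Lemma vanish_belowB k p q :
  vanish_below k p -> vanish_below k q -> vanish_below k (p - q).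
Proof. by move=> hp hq; apply: vanish_belowD => //; apply: vanish_belowN. Qed.

Lemma vanish_belowM k1 k2 p q :
  vanish_below k1 p -> vanish_below k2 q -> vanish_below (k1 + k2) (p * q).
Proof.
move=> hp hq i lt_ik; rewrite coefM big1 // => j _.
have [lt_jk1|le_k1j] := ltnP j k1; first by rewrite hp ?mul0r.
by rewrite hq ?mulr0 //; have := ltn_ord j; lia.
Qed.

Lemma vanish_belowMl k s p : vanish_below k p -> vanish_below k (s * p).
Proof. by move=> hp; rewrite -[k]add0n; apply: vanish_belowM => // i. Qed.

Lemma vanish_belowX k u : vanish_below 1 u -> vanish_below k (u ^+ k).
Proof.
move=> hu; elim: k => [|k ih]; first by move=> i.
by rewrite exprSr -addn1; apply: vanish_belowM.
Qed.

(* Division by [1 + u] modulo [q ^ k], using the geometric series of [- u]. *)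
Lemma vanish_below_cancel k u p :
  vanish_below 1 u -> vanish_below k (p * (1 + u)) -> vanish_below k p.
Proof.
move=> hu hp.
have -> : p = p * (1 + u) * (\sum_(i < k) (- u) ^+ i) + p * (- u) ^+ k.
  by rewrite -mulrA [_ * \sum_(i < k) _]mulrC sum_exprN_mul1D mulrBr mulr1 subrK.
apply: vanish_belowD; first by rewrite mulrC; apply: vanish_belowMl.
by apply/vanish_belowMl/vanish_belowX/vanish_belowN.
Qed.

End VanishBelow.

Definition logser (A : nzRingType) (iota : rat -> A) N (u : A) :=
  \sum_(1 <= m < N.+1) iota ((-1) ^+ m.+1 / m%:R) * u ^+ m.

Section Derivation.
Variables (A : comNzRingType) (iota : {rmorphism rat -> A}) (D : {additive A -> A}).
Hypothesis DM : forall a b, D (a * b) = D a * b + a * D b.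
Hypothesis D_iota : forall c, D (iota c) = 0.

Lemma derivation1 : D 1 = 0.
Proof. by rewrite -(rmorph1 iota) D_iota. Qed.

Lemma derivation_constM c a : D (iota c * a) = iota c * D a.
Proof. by rewrite DM D_iota mul0r add0r. Qed.

Lemma derivationX u m : D (u ^+ m.+1) = u ^+ m * D u *+ m.+1.
Proof.
elim: m => [|m ih]; first by rewrite expr1 expr0 mul1r.
by rewrite exprS DM ih mulrnAr mulrA -exprS [RHS]mulrS [D u * _]mulrC.
Qed.

Lemma logser_coefMn i : ((-1) ^+ i.+2 / i.+1%:R : rat) *+ i.+1 = (-1) ^+ i.
Proof.
by rewrite -[_ *+ i.+1]mulr_natr divfK ?pnatr_eq0 // !exprS !mulN1r opprK.
Qed.

Lemma derivation_logser N u : D (logser iota N u) * (1 + u) = D u - (- u) ^+ N * D u.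
Proof.
rewrite /logser raddf_sum big_add1 big_mkord.
rewrite (eq_bigr (fun i : 'I_N => (- u) ^+ i * D u)); last first.
  move=> i _; rewrite derivation_constM derivationX mulrnAr -mulrnAl -rmorphMn.
  by rewrite logser_coefMn rmorphXn rmorphN1 mulrA -exprNn.
by rewrite -mulr_suml mulrAC sum_exprN_mul1D mulrBl mul1r.
Qed.

End Derivation.

Section BivariateDerivations.
Variable A : comNzRingType.

Definition tderiv (p : {poly {poly A}}) := map_poly (@deriv A) p.
Definition qderiv (p : {poly A}) := 'X * p^`().

HB.instance Definition _ :=
  GRing.isZmodMorphism.Build _ _ tderiv (raddfB (map_poly (@deriv A))).

Lemma qderivB : zmod_morphism qderiv.
Proof. by move=> p q; rewrite /qderiv derivB mulrBr. Qed.

HB.instance Definition _ := GRing.isZmodMorphism.Build _ _ qderiv qderivB.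

Lemma tderivM p q : tderiv (p * q) = tderiv p * q + p * tderiv q.
Proof.
apply/polyP => i; rewrite coef_map /= coefD !coefM raddf_sum -big_split /=.
by apply: eq_bigr => j _; rewrite derivM !coef_map.
Qed.

Lemma tderivCC a : tderiv a%:P%:P = 0.
Proof. by rewrite /tderiv map_polyC /= derivC. Qed.

Lemma qderivM p q : qderiv (p * q) = qderiv p * q + p * qderiv q.
Proof.
by rewrite /qderiv derivM mulrDr mulrA [p * ('X * _)]mulrCA !mulrA [_ * p]mulrC.
Qed.

Lemma qderivC a : qderiv a%:P = 0.
Proof. by rewrite /qderiv derivC mulr0. Qed.

Lemma coef_qderiv p k : (qderiv p)`_k = p`_k *+ k.
Proof. by rewrite /qderiv coefXM; case: k => [|k]; rewrite ?mulr0n /= ?coef_deriv. Qed.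

End BivariateDerivations.

Section GeneratingSeries.
Variables (A : comNzRingType) (iota : {rmorphism rat -> A}) (x y : nat -> A) (N : nat).
Local Notation P := {poly {poly A}}.

Definition part_factor t s := y t + x t * s%:R.

(* The inner variable is t and the outer one q: the coefficient of q^d t^r is
   r!^-1 times the sum over the compositions of d into r positive parts. *)
Definition Fser : P :=
  \poly_(d < N.+1) \poly_(r < d.+1) (iota (r`!)%:R^-1 * comp_sum part_factor r d).

Definition pos_part (z : nat -> A) a := if a == 0%N then 0 else z a.

Definition pseries z : P := \poly_(a < N.+1) (pos_part z a)%:P.

Definition rat_const : {rmorphism rat -> P} := (polyC \o polyC \o iota)%FUN.

Definition Gser : P := logser rat_const N (Fser - 1).

Lemma coef_Fser d r : (d <= N)%N ->
  Fser`_d`_r = iota (r`!)%:R^-1 * comp_sum part_factor r d.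
Proof.
move=> le_dN; rewrite coef_poly ltnS le_dN coef_poly.
by case: ltnP => // lt_dr; rewrite comp_sum_gt ?mulr0.
Qed.

Lemma coef_Fser_t0 d : Fser`_d`_0 = (d == 0)%:R.
Proof.
have [le_dN|lt_Nd] := leqP d N.
  by rewrite coef_Fser // comp_sum0 fact0 invr1 rmorph1 mul1r.
have d_gt0 : (0 < d)%N by apply: leq_ltn_trans lt_Nd.
by rewrite coef_poly ltnS leqNgt lt_Nd coef0 gtn_eqF.
Qed.

Lemma Fser_sub1_vanish : vanish_below 1 (Fser - 1).
Proof.
move=> i; rewrite ltnS leqn0 => /eqP ->; rewrite coefB coef1 /=.
apply/polyP => r; rewrite coefB coef_Fser // coef1 coef0.
case: r => [|r]; first by rewrite comp_sum0 fact0 invr1 rmorph1 mul1r subrr.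
by rewrite comp_sum_gt ?mulr0 ?subr0.
Qed.

Lemma invfactSMn r : ((r.+1)`!%:R^-1 : rat) *+ r.+1 = (r`!)%:R^-1.
Proof.
by rewrite -[_ *+ r.+1]mulr_natl factS natrM invfM mulrA mulfV ?mul1r // pnatr_eq0.
Qed.

(* Peeling off the last part of a composition. *)
Lemma Fser_ode :
  vanish_below N.+1 (tderiv Fser - (pseries y * Fser + pseries x * qderiv Fser)).
Proof.
move=> d; rewrite ltnS => le_dN.
apply/eqP; rewrite coefB subr_eq0; apply/eqP/polyP => r.
rewrite coef_map /= coef_deriv coef_Fser //.
rewrite coefD !coefM coefD !coef_sum -big_split /=.
rewrite -mulrnAl -rmorphMn invfactSMn comp_sumS mulr_sumr big_mkcond /=.
apply: eq_bigr => j _.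
have le_jN : (j <= N)%N by have := ltn_ord j; lia.
rewrite coef_qderiv !(coef_poly _ _ j) ltnS le_jN !coefCM coefMn coef_Fser; last lia.
rewrite /pos_part; case: eqP => [->|/eqP j_neq0] /=; first by rewrite !mul0r addr0.
rewrite lt0n j_neq0 /part_factor mulrDl mulrDr; congr (_ + _); first by rewrite mulrCA.
by rewrite mulrnAr mulr1 mulrnAl [RHS]mulrnAr mulrCA mulrnAr.
Qed.

Lemma logderiv_Fser (D : {additive P -> P}) :
  (forall a b, D (a * b) = D a * b + a * D b) -> (forall c, D (rat_const c) = 0) ->
  vanish_below 1 (D (Fser - 1)) -> vanish_below N.+1 (D Gser * Fser - D Fser).
Proof.
move=> DM D_const hD.
have DF : D (Fser - 1) = D Fser by rewrite raddfB (derivation1 D_const) subr0.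
have F1 : 1 + (Fser - 1) = Fser by rewrite addrC subrK.
have := derivation_logser DM D_const N (Fser - 1); rewrite F1 -/Gser DF => ->.
rewrite addrAC subrr add0r -addn1.
apply/vanish_belowN/vanish_belowM; last by rewrite -DF.
exact/vanish_belowX/vanish_belowN/Fser_sub1_vanish.
Qed.

Lemma Gser_ode :
  vanish_below N.+1 (tderiv Gser - (pseries y + pseries x * qderiv Gser)).
Proof.
have Gt : vanish_below N.+1 (tderiv Gser * Fser - tderiv Fser).
  apply: logderiv_Fser; first exact: tderivM.
    by move=> c; rewrite /rat_const /= tderivCC.
  move=> i; rewrite ltnS leqn0 => /eqP ->.
  by rewrite coef_map /= (Fser_sub1_vanish (ltn0Sn 0)) raddf0.
have Gq : vanish_below N.+1 (qderiv Gser * Fser - qderiv Fser).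
  apply: logderiv_Fser; first exact: qderivM.
    by move=> c; rewrite /rat_const /= qderivC.
  by move=> i; rewrite ltnS leqn0 => /eqP ->; rewrite coef_qderiv mulr0n.
apply: (vanish_below_cancel Fser_sub1_vanish).
have -> : 1 + (Fser - 1) = Fser by rewrite addrC subrK.
have -> : (tderiv Gser - (pseries y + pseries x * qderiv Gser)) * Fser =
    (tderiv Gser * Fser - tderiv Fser)
    + (tderiv Fser - (pseries y * Fser + pseries x * qderiv Fser))
    - pseries x * (qderiv Gser * Fser - qderiv Fser) by ring.
exact: vanish_belowB (vanish_belowD Gt Fser_ode) (vanish_belowMl _ Gq).
Qed.

Lemma coef_Gser_t0 d : Gser`_d`_0 = 0.
Proof.
have Fser_t0 : map_poly (horner_eval 0) Fser = 1.
  by apply/polyP => k; rewrite coef_map /= /horner_eval horner_coef0 coef_Fser_t0 coef1.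
rewrite -horner_coef0 -[_.[0]]/(horner_eval 0 _) -coef_map /Gser /logser.
rewrite rmorph_sum coef_sum big_add1 big1 // => m _.
rewrite rmorphM rmorphXn rmorphB rmorph1 /= Fser_t0 subrr.
by rewrite [0 ^+ _]exprS mul0r mulr0 coef0.
Qed.

Lemma coef_Gser_rec d r : (d <= N)%N ->
  Gser`_d`_r.+1 = iota (r.+1)%:R^-1 * ((pos_part y d)%:P`_r
    + \sum_(j < d.+1) pos_part x j * (Gser`_(d - j)`_r *+ (d - j))).
Proof.
move=> le_dN.
have Gdr : Gser`_d`_r.+1 *+ r.+1 = (pos_part y d)%:P`_r
    + \sum_(j < d.+1) pos_part x j * (Gser`_(d - j)`_r *+ (d - j)).
  have /eqP := Gser_ode (le_dN : (d < N.+1)%N).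
  rewrite coefB subr_eq0 => /eqP /(congr1 (fun p : {poly A} => p`_r)).
  rewrite coef_map /= coef_deriv coefD coef_poly ltnS le_dN coefM coefD => ->.
  congr (_ + _); rewrite coef_sum; apply: eq_bigr => j _.
  have le_jN : (j <= N)%N by have := ltn_ord j; lia.
  by rewrite coef_poly ltnS le_jN coefCM coef_qderiv coefMn.
rewrite -Gdr mulrnAr -mulrnAl -rmorphMn -[_ *+ r.+1]mulr_natr mulVf ?pnatr_eq0 //.
by rewrite rmorph1 mul1r.
Qed.

End GeneratingSeries.

Section Proposition.
Variable n : nat.
Local Notation x := (xv n).
Local Notation y := (yv n).
Local Notation iota := (in_alg (Rn n)).

Lemma ydeg_le_coef_Gser N r d : (d <= N)%N -> ydeg_le 1 ((Gser iota x y N)`_d`_r).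
Proof.
elim: r d => [|r ih] d le_dN; first by rewrite coef_Gser_t0; apply: ydeg_le0.
rewrite coef_Gser_rec // mulr_algl; apply/ydeg_leZ/ydeg_leD.
  rewrite coefC /pos_part; case: (r == 0%N); case: (d == 0%N);
    by [apply: ydeg_le0 | apply: ydeg_le_Xr].
apply: ydeg_le_sum => j _; rewrite -[1%N]/(0 + 1)%N; apply: ydeg_leM.
  by rewrite /pos_part; case: eqP => _; [apply: ydeg_le0 | apply: ydeg_le_Xl].
by apply/ydeg_leMn/ih; lia.
Qed.

Lemma Fser_t1 N : map_poly (horner_eval 1) (Fser iota x y N) = Ftrunc n N.
Proof.
apply/polyP => k; rewrite coef_map !coef_poly; case: ifP => _; last exact: raddf0.
rewrite /= /horner_eval horner_poly; apply: eq_bigr => r _.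
by rewrite expr1n mulr1 mulr_algl /comp_sum /comp_sum_bounded scaler_sumr.
Qed.

Lemma logFcoefE d : logFcoef n d = (map_poly (horner_eval 1) (Gser iota x y d))`_d.
Proof.
rewrite /Gser /logser rmorph_sum coef_sum; apply: eq_bigr => m _.
rewrite rmorphM rmorphXn rmorphB rmorph1 /= Fser_t1 map_polyC /=.
by rewrite coefCM /horner_eval hornerC mulr_algl.
Qed.

End Proposition.

Theorem proposition8p1 (n d : nat) :
  (d <= n.+1)%N -> ydeg_le1 (logFcoef n d).
Proof.
move=> _; rewrite logFcoefE coef_map /= /horner_eval horner_coef.
apply: ydeg_le_sum => i _; rewrite expr1n mulr1; exact: ydeg_le_coef_Gser.
Qed.
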